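(* For every integer $n\ge1$, $$J\mathcal{G}_{n+1}^{(3)}J\mathcal{G}_{n-1}^{(3)}-\left[J\mathcal{G}_{n}^{(3)}\right]^{2}=\frac{1}{49}\left[2^{n}\left(2\Theta Y_{n-1}(1)-Y_{n}(1)\Theta\right)-\left(\Xi+14\Omega\right)\right]$$ and $$K\mathcal{G}_{n+1}^{(3)}K\mathcal{G}_{n-1}^{(3)}-\left[K\mathcal{G}_{n}^{(3)}\right]^{2}=2^{n-1}\left[2\Theta Y^{*}_{n-1}(1)-Y^{*}_{n}(1)\Theta\right]-\left[\Xi^{*}+6\Omega\right],$$ where $Y_{m}(1)=X_{m}(2\mathbf{A}-\mathbf{B})-X_{m+1}(3\mathbf{B}+\mathbf{A})$, $Y^{*}_{m}(1)=X_{m}(2\mathbf{C}-\mathbf{D})-X_{m+1}(3\mathbf{D}+\mathbf{C})$, $\Xi=\mathbf{A}^2+\mathbf{A}\mathbf{B}+\mathbf{B}^2$ and $\Xi^{*}=\mathbf{C}^2+\mathbf{C}\mathbf{D}+\mathbf{D}^2$.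
   Context: Fix real numbers $\lambda_1,\lambda_2,\lambda_3$. The algebra $\mathbb{H}_{\lambda_1,\lambda_2,\lambda_3}$ of 3-parameter generalized quaternions is the real associative algebra of elements $\psi_0+\psi_1\mathbf{e}_1+\psi_2\mathbf{e}_2+\psi_3\mathbf{e}_3$ ($\psi_i\in\mathbb{R}$) with $\mathbf{e}_1^2=-\lambda_1\lambda_2$, $\mathbf{e}_2^2=-\lambda_1\lambda_3$, $\mathbf{e}_3^2=-\lambda_2\lambda_3$, $\mathbf{e}_1\mathbf{e}_2=-\mathbf{e}_2\mathbf{e}_1=\lambda_1\mathbf{e}_3$, $\mathbf{e}_1\mathbf{e}_3=-\mathbf{e}_3\mathbf{e}_1=-\lambda_2\mathbf{e}_2$, $\mathbf{e}_2\mathbf{e}_3=-\mathbf{e}_3\mathbf{e}_2=\lambda_3\mathbf{e}_1$. The third-order Jacobsthal numbers are $J_0^{(3)}=0$, $J_1^{(3)}=J_2^{(3)}=1$, $J_n^{(3)}=J_{n-1}^{(3)}+J_{n-2}^{(3)}+2J_{n-3}^{(3)}$ for $n\ge3$; the modified third-order Jacobsthal numbers are $K_0^{(3)}=3$, $K_1^{(3)}=1$, $K_2^{(3)}=3$, $K_n^{(3)}=K_{n-1}^{(3)}+K_{n-2}^{(3)}+2K_{n-3}^{(3)}$ for $n\ge3$. For $n\ge0$ define $J\mathcal{G}_n^{(3)}=J_n^{(3)}+J_{n+1}^{(3)}\mathbf{e}_1+J_{n+2}^{(3)}\mathbf{e}_2+J_{n+3}^{(3)}\mathbf{e}_3$ and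 $K\mathcal{G}_n^{(3)}=K_n^{(3)}+K_{n+1}^{(3)}\mathbf{e}_1+K_{n+2}^{(3)}\mathbf{e}_2+K_{n+3}^{(3)}\mathbf{e}_3$. Here $X_n=0,1,-1$ according as $n\equiv0,1,2\pmod 3$, $\Theta=1+2\mathbf{e}_1+4\mathbf{e}_2+8\mathbf{e}_3$, $\mathbf{A}=1+2\mathbf{e}_1-3\mathbf{e}_2+\mathbf{e}_3$, $\mathbf{B}=2-3\mathbf{e}_1+\mathbf{e}_2+2\mathbf{e}_3$, $\mathbf{C}=1-2\mathbf{e}_1+\mathbf{e}_2+\mathbf{e}_3$, $\mathbf{D}=-2+\mathbf{e}_1+\mathbf{e}_2-2\mathbf{e}_3$, and $\Omega=\lambda_3\mathbf{e}_1+\lambda_2\mathbf{e}_2+\lambda_1\mathbf{e}_3$. *)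

From Stdlib Require Import Reals Lra Lia.
Open Scope R_scope.

(* Elements psi0 + psi1 e1 + psi2 e2 + psi3 e3 of H_{l1,l2,l3}. *)
Record quat := Quat { q0 : R; q1 : R; q2 : R; q3 : R }.

Definition qadd (a b : quat) : quat :=
  Quat (q0 a + q0 b) (q1 a + q1 b) (q2 a + q2 b) (q3 a + q3 b).
Definition qopp (a : quat) : quat := Quat (- q0 a) (- q1 a) (- q2 a) (- q3 a).
Definition qsub (a b : quat) : quat := qadd a (qopp b).
Definition qscal (r : R) (a : quat) : quat :=
  Quat (r * q0 a) (r * q1 a) (r * q2 a) (r * q3 a).

(* Multiplication determined by bilinearity and the rules
   e1^2=-l1 l2, e2^2=-l1 l3, e3^2=-l2 l3,
   e1e2=-e2e1=l1 e3, e1e3=-e3e1=-l2 e2, e2e3=-e3e2=l3 e1. *)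
Definition qmul (l1 l2 l3 : R) (a b : quat) : quat :=
  Quat (q0 a * q0 b - l1 * l2 * q1 a * q1 b - l1 * l3 * q2 a * q2 b
          - l2 * l3 * q3 a * q3 b)
       (q0 a * q1 b + q1 a * q0 b + l3 * (q2 a * q3 b - q3 a * q2 b))
       (q0 a * q2 b + q2 a * q0 b + l2 * (q3 a * q1 b - q1 a * q3 b))
       (q0 a * q3 b + q3 a * q0 b + l1 * (q1 a * q2 b - q2 a * q1 b)).

Fixpoint Jac (n : nat) : R :=
  match n with
  | 0%nat => 0
  | 1%nat => 1
  | 2%nat => 1
  | S ((S (S m as q)) as p) => Jac p + Jac q + 2 * Jac m
  end.

Fixpoint Kac (n : nat) : R :=
  match n with
  | 0%nat => 3
  | 1%nat => 1
  | 2%nat => 3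
  | S ((S (S m as q)) as p) => Kac p + Kac q + 2 * Kac m
  end.

Definition JG (n : nat) : quat := Quat (Jac n) (Jac (n+1)) (Jac (n+2)) (Jac (n+3)).
Definition KG (n : nat) : quat := Quat (Kac n) (Kac (n+1)) (Kac (n+2)) (Kac (n+3)).

Definition Xs (n : nat) : R :=
  match (n mod 3)%nat with 0%nat => 0 | 1%nat => 1 | _ => -1 end.

Definition Theta : quat := Quat 1 2 4 8.
Definition qA : quat := Quat 1 2 (-3) 1.
Definition qB : quat := Quat 2 (-3) 1 2.
Definition qC : quat := Quat 1 (-2) 1 1.
Definition qD : quat := Quat (-2) 1 1 (-2).
Definition Omega (l1 l2 l3 : R) : quat := Quat 0 l3 l2 l1.

Definition Y1 (m : nat) : quat :=
  qsub (qscal (Xs m) (qsub (qscal 2 qA) qB))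
       (qscal (Xs (m+1)) (qadd (qscal 3 qB) qA)).
Definition Y1s (m : nat) : quat :=
  qsub (qscal (Xs m) (qsub (qscal 2 qC) qD))
       (qscal (Xs (m+1)) (qadd (qscal 3 qD) qC)).

Definition Xi (l1 l2 l3 : R) : quat :=
  qadd (qadd (qmul l1 l2 l3 qA qA) (qmul l1 l2 l3 qA qB)) (qmul l1 l2 l3 qB qB).
Definition Xis (l1 l2 l3 : R) : quat :=
  qadd (qadd (qmul l1 l2 l3 qC qC) (qmul l1 l2 l3 qC qD)) (qmul l1 l2 l3 qD qD).

(* Both sequences have Binet formulas JG_m = (2^(m+1) Theta - P_m) / 7 and
   KG_m = 2^m Theta - P*_m, with 3-periodic parts P_m = X_(m+1) B - X_m A and
   P*_m = X_(m+1) D - X_m C.  In the Cassini expression the 2^(2m) terms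
   cancel, the mixed terms produce the Y-terms because Y_m = P_(m+1) - 2 P_m,
   and the purely periodic term is
     P_(k+2) P_k - P_(k+1)^2 = -(x^2 + x y + y^2) (B^2 + BA + A^2)
   with x = X_k, y = X_(k+1); it is constant since x^2 + x y + y^2 = 1. *)

From Stdlib Require Import Reals Lia.
Open Scope R_scope.

Lemma quat_eq (a b : quat) :
  q0 a = q0 b -> q1 a = q1 b -> q2 a = q2 b -> q3 a = q3 b -> a = b.
Proof. destruct a, b; cbn; intros -> -> -> ->; reflexivity. Qed.

Ltac quat_components :=
  apply quat_eq;
  cbn [q0 q1 q2 q3 qadd qsub qopp qscal qmul Theta qA qB qC qD Omega].

Lemma qscal_1 (a : quat) : qscal 1 a = a.
Proof. quat_components; ring. Qed.

Lemma Xs_add3 m : Xs (m + 3) = Xs m.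
Proof.
  unfold Xs. replace (m + 3)%nat with (m + 1 * 3)%nat by lia.
  now rewrite Nat.Div0.mod_add.
Qed.

Lemma Xs_add2 m : Xs (m + 2) = - Xs m - Xs (m + 1).
Proof.
  induction m as [|m IH].
  - cbn. ring.
  - replace (S m + 2)%nat with (m + 3)%nat by lia.
    replace (S m + 1)%nat with (m + 2)%nat by lia.
    replace (S m) with (m + 1)%nat by lia.
    rewrite Xs_add3, IH. ring.
Qed.

Lemma Xs_add4 m : Xs (m + 4) = Xs (m + 1).
Proof. rewrite <- (Xs_add3 (m + 1)). f_equal. lia. Qed.

Lemma Xs_norm m : Xs m ^ 2 + Xs m * Xs (m + 1) + Xs (m + 1) ^ 2 = 1.
Proof.
  induction m as [|m IH].
  - cbn. ring.
  - replace (S m + 1)%nat with (m + 2)%nat by lia.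
    replace (S m) with (m + 1)%nat by lia.
    rewrite Xs_add2, <- IH. ring.
Qed.

Ltac Xs_reduce :=
  rewrite <- ?Nat.add_assoc; cbn [Nat.add];
  rewrite ?Xs_add4, ?Xs_add3, ?Xs_add2.

Definition jacobsthal_rec (u : nat -> R) : Prop :=
  forall m, u (m + 3)%nat = u (m + 2)%nat + u (m + 1)%nat + 2 * u m.

Lemma jacobsthal_rec_ext {u w : nat -> R} :
  jacobsthal_rec u -> jacobsthal_rec w ->
  u 0%nat = w 0%nat -> u 1%nat = w 1%nat -> u 2%nat = w 2%nat ->
  forall m, u m = w m.
Proof.
  intros Hu Hw H0 H1 H2.
  assert (H : forall m, u m = w m /\ u (m + 1)%nat = w (m + 1)%nat
                        /\ u (m + 2)%nat = w (m + 2)%nat).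
  { induction m as [|m [E0 [E1 E2]]]; [now repeat split|].
    replace (S m) with (m + 1)%nat by lia.
    replace (m + 1 + 1)%nat with (m + 2)%nat by lia.
    replace (m + 1 + 2)%nat with (m + 3)%nat by lia.
    rewrite Hu, Hw, E0, E1, E2. now repeat split. }
  intro m. apply H.
Qed.

Lemma Jac_rec : jacobsthal_rec Jac.
Proof. intro m. rewrite !Nat.add_succ_r, !Nat.add_0_r. reflexivity. Qed.

Lemma Kac_rec : jacobsthal_rec Kac.
Proof. intro m. rewrite !Nat.add_succ_r, !Nat.add_0_r. reflexivity. Qed.

(* 2 is a root of x^3 - x^2 - x - 2 = (x - 2)(x^2 + x + 1); X_n and X_(n+1)
   span the solutions coming from the primitive cube roots of unity. *)
Lemma jacobsthal_rec_binet (a b c : R) :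
  jacobsthal_rec (fun m => a * 2 ^ m + b * Xs m + c * Xs (m + 1)).
Proof. intro m. Xs_reduce. rewrite !pow_add. ring. Qed.

Lemma Jac_binet m : Jac m = 2 / 7 * 2 ^ m + / 7 * Xs m - 2 / 7 * Xs (m + 1).
Proof.
  rewrite (jacobsthal_rec_ext Jac_rec
             (jacobsthal_rec_binet (2 / 7) (/ 7) (- (2 / 7)))); cbn; field.
Qed.

Lemma Kac_binet m : Kac m = 2 ^ m + Xs m + 2 * Xs (m + 1).
Proof.
  rewrite (jacobsthal_rec_ext Kac_rec (jacobsthal_rec_binet 1 1 2)); cbn; ring.
Qed.

(* The 3-periodic part of the Binet formulas: it takes the values U, -U-V, V
   for m = 0, 1, 2 (mod 3). *)
Definition periodic_part (U V : quat) (m : nat) : quat :=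
  qsub (qscal (Xs (m + 1)) U) (qscal (Xs m) V).

Definition qdiff2 (P : nat -> quat) (m : nat) : quat :=
  qsub (P (m + 1)%nat) (qscal 2 (P m)).

Lemma qdiff2_periodic_part U V m :
  qdiff2 (periodic_part U V) m
  = qsub (qscal (Xs m) (qsub (qscal 2 V) U)) (qscal (Xs (m + 1)) (qadd (qscal 3 U) V)).
Proof. unfold qdiff2, periodic_part. Xs_reduce. quat_components; ring. Qed.

Lemma JG_binet m :
  JG m = qscal (/ 7) (qsub (qscal (2 * 2 ^ m) Theta) (periodic_part qB qA m)).
Proof.
  unfold JG, periodic_part. quat_components;
    rewrite ?Jac_binet; Xs_reduce; rewrite ?pow_add; field.
Qed.

Lemma KG_binet m : KG m = qsub (qscal (2 ^ m) Theta) (periodic_part qD qC m).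
Proof.
  unfold KG, periodic_part. quat_components;
    rewrite ?Kac_binet; Xs_reduce; rewrite ?pow_add; ring.
Qed.

Section Cassini.

Variables l1 l2 l3 : R.
Local Notation qm := (qmul l1 l2 l3).

Lemma cassini_binet (s r : R) (T : quat) (P G : nat -> quat)
  (HG : forall m, G m = qscal s (qsub (qscal (r * 2 ^ m) T) (P m))) (k : nat) :
  qsub (qm (G (k + 2)%nat) (G k)) (qm (G (k + 1)%nat) (G (k + 1)%nat))
  = qscal (s * s)
      (qadd (qscal (r * 2 ^ k)
               (qsub (qscal 2 (qm T (qdiff2 P k))) (qm (qdiff2 P (k + 1)) T)))
            (qsub (qm (P (k + 2)%nat) (P k)) (qm (P (k + 1)%nat) (P (k + 1)%nat)))).
Proof.
  rewrite !HG. unfold qdiff2.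
  replace (k + 1 + 1)%nat with (k + 2)%nat by lia.
  rewrite !pow_add. quat_components; ring.
Qed.

Lemma periodic_part_cassini U V k :
  qsub (qm (periodic_part U V (k + 2)) (periodic_part U V k))
       (qm (periodic_part U V (k + 1)) (periodic_part U V (k + 1)))
  = qopp (qadd (qadd (qm U U) (qm U V)) (qm V V)).
Proof.
  transitivity (qscal (- (Xs k ^ 2 + Xs k * Xs (k + 1) + Xs (k + 1) ^ 2))
                      (qadd (qadd (qm U U) (qm U V)) (qm V V))).
  - unfold periodic_part. Xs_reduce. quat_components; ring.
  - rewrite Xs_norm. quat_components; ring.
Qed.

(* B^2 + BA + A^2 exceeds Xi = A^2 + AB + B^2 by the commutator
   BA - AB = 14 Omega, as the vector parts of B and A have cross product
   (7, 7, 7); for D and C the cross product is (3, 3, 3). *)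
Lemma sum_sq_BA :
  qadd (qadd (qm qB qB) (qm qB qA)) (qm qA qA)
  = qadd (Xi l1 l2 l3) (qscal 14 (Omega l1 l2 l3)).
Proof. unfold Xi. quat_components; ring. Qed.

Lemma sum_sq_DC :
  qadd (qadd (qm qD qD) (qm qD qC)) (qm qC qC)
  = qadd (Xis l1 l2 l3) (qscal 6 (Omega l1 l2 l3)).
Proof. unfold Xis. quat_components; ring. Qed.

End Cassini.

Theorem corollary3p3 (l1 l2 l3 : R) (n : nat) (hn : (1 <= n)%nat) :
  qsub (qmul l1 l2 l3 (JG (n+1)) (JG (n-1))) (qmul l1 l2 l3 (JG n) (JG n))
  = qscal (/ 49)
      (qsub (qscal (2 ^ n)
               (qsub (qscal 2 (qmul l1 l2 l3 Theta (Y1 (n-1))))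
                     (qmul l1 l2 l3 (Y1 n) Theta)))
            (qadd (Xi l1 l2 l3) (qscal 14 (Omega l1 l2 l3))))
  /\
  qsub (qmul l1 l2 l3 (KG (n+1)) (KG (n-1))) (qmul l1 l2 l3 (KG n) (KG n))
  = qsub (qscal (2 ^ (n-1))
            (qsub (qscal 2 (qmul l1 l2 l3 Theta (Y1s (n-1))))
                  (qmul l1 l2 l3 (Y1s n) Theta)))
         (qadd (Xis l1 l2 l3) (qscal 6 (Omega l1 l2 l3))).
Proof.
  destruct n as [|k]; [lia|].
  replace (S k - 1)%nat with k by lia.
  replace (S k + 1)%nat with (k + 2)%nat by lia.
  replace (S k) with (k + 1)%nat by lia.
  split.
  - rewrite (cassini_binet l1 l2 l3 (/ 7) 2 Theta _ JG JG_binet).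
    rewrite periodic_part_cassini, sum_sq_BA, !qdiff2_periodic_part.
    replace (/ 7 * / 7) with (/ 49) by field.
    replace (2 ^ (k + 1)) with (2 * 2 ^ k) by (rewrite pow_add; ring).
    reflexivity.
  - rewrite (cassini_binet l1 l2 l3 1 1 Theta (periodic_part qD qC) KG).
    + rewrite periodic_part_cassini, sum_sq_DC, !qdiff2_periodic_part.
      rewrite !Rmult_1_l, qscal_1.
      reflexivity.
    + intro m. rewrite KG_binet, Rmult_1_l, qscal_1. reflexivity.
Qed.
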